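(* Let $N\ge 1$, let $\rho$ be any $N$-qubit density matrix, let $O$ be any Hermitian $2^N\times 2^N$ matrix, and let $\hat\sigma$ be a SIC POVM classical shadow of $\rho$. Then $$\mathrm{Var}\big[\mathrm{tr}(O\hat\sigma)\big]\le 3^N\,\mathrm{tr}(O^2).$$
   Context: Let $|\psi_1\rangle,\dots,|\psi_4\rangle\in\mathbb C^2$ be unit vectors forming a single-qubit SIC set, i.e. $|\langle\psi_i|\psi_j\rangle|^2=1/3$ for all $i\neq j$ (their Bloch vectors form a regular tetrahedron); then $\{\tfrac12|\psi_i\rangle\langle\psi_i|\}_{i=1}^4$ is a POVM (the single-qubit SIC POVM). Performing this measurement on each qubit of an $N$-qubit state $\rho$ yields an outcome string $(i_1,\dots,i_N)\in\{1,2,3,4\}^N$ with probability $\Pr[i_1\cdots i_N\mid\rho]=2^{-N}\langle\psi_{i_1}\otimes\cdots\otimes\psi_{i_N}|\,\rho\,|\psi_{i_1}\otimes\cdots\otimes\psi_{i_N}\rangle$. The (SIC POVM) classical shadow associated with this random outcome is the random Hermitian matrix $\hat\sigma=\bigotimes_{n=1}^N\big(3|\psi_{i_n}\rangle\langle\psi_{i_n}|-\mathbb I\big)$. Expectations and variances are taken with respect to the outcome distribution. *)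

(* Complex numbers are modelled as R[i] for an arbitrary
   real closed field R (this includes the classical reals). *)
From mathcomp Require Import all_boot all_algebra.
From mathcomp Require Export complex.
Import GRing.Theory Num.Theory.
Set Implicit Arguments.
Unset Strict Implicit.
Unset Printing Implicit Defensive.
Local Open Scope ring_scope.

Definition adjmx (C : numClosedFieldType) m n (A : 'M[C]_(m, n)) : 'M[C]_(n, m) :=
  (map_mx Num.conj A)^T.

Definition is_hermitian_mx (C : numClosedFieldType) n (A : 'M[C]_n) : Prop :=
  adjmx A = A.

Definition psd (C : numClosedFieldType) n (A : 'M[C]_n) : Prop :=
  is_hermitian_mx A /\ forall v : 'cV[C]_n, 0 <= (adjmx v *m A *m v) 0 0.

Definition density_matrix (C : numClosedFieldType) n (rho : 'M[C]_n) : Prop :=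
  psd rho /\ \tr rho = 1.

Definition braket (C : numClosedFieldType) n (u v : 'cV[C]_n) : C :=
  (adjmx u *m v) 0 0.

Definition qubit_SIC (C : numClosedFieldType) (psi : 'I_4 -> 'cV[C]_2) : Prop :=
  (forall i, braket (psi i) (psi i) = 1) /\
  (forall i j, i != j -> `|braket (psi i) (psi j)| ^+ 2 = 3^-1).

(* n-th bit (qubit n value) of a computational basis index k of (C^2)^{\otimes N} *)
Definition qbit N (n : 'I_N) (k : 'I_(2 ^ N)) : 'I_2 := inord ((k %/ 2 ^ n) %% 2).

(* Kronecker (tensor) product A_0 \otimes ... \otimes A_{N-1} of 2x2 matrices,
   written entrywise in the computational basis *)
Definition kron (C : numClosedFieldType) N (A : 'I_N -> 'M[C]_2) : 'M[C]_(2 ^ N) :=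
  \matrix_(k, l) \prod_(n < N) A n (qbit n k) (qbit n l).

Definition kron_ket (C : numClosedFieldType) N (v : 'I_N -> 'cV[C]_2) : 'cV[C]_(2 ^ N) :=
  \col_k \prod_(n < N) v n (qbit n k) 0.

Definition outcome N := {ffun 'I_N -> 'I_4}.

Definition sic_prob (C : numClosedFieldType) (psi : 'I_4 -> 'cV[C]_2) N
  (rho : 'M[C]_(2 ^ N)) (s : outcome N) : C :=
  (2 ^+ N)^-1 * (adjmx (kron_ket (fun n => psi (s n))) *m rho
                   *m kron_ket (fun n => psi (s n))) 0 0.

Definition sic_shadow (C : numClosedFieldType) (psi : 'I_4 -> 'cV[C]_2) N
  (s : outcome N) : 'M[C]_(2 ^ N) :=
  kron (fun n => 3%:R *: (psi (s n) *m adjmx (psi (s n))) - 1%:M).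

Definition expectation (C : numClosedFieldType) N (p : outcome N -> C)
  (X : outcome N -> C) : C := \sum_(s : outcome N) p s * X s.

Definition variance (C : numClosedFieldType) N (p : outcome N -> C)
  (X : outcome N -> C) : C :=
  expectation p (fun s => (X s - expectation p X) ^+ 2).

From mathcomp Require Import all_boot all_order all_algebra complex.
From mathcomp Require Import ring.
Import Order.TTheory GRing.Theory Num.Theory.
Set Implicit Arguments.
Unset Strict Implicit.
Unset Printing Implicit Defensive.
Local Open Scope ring_scope.

(* Write [X s = tr (O sigma_s)].  The SIC is a tight frame, so the outcome
   probabilities sum to one and [Var X <= E[X^2]].  Each probability is at most
   [2^-N], because [<v|rho|v> <= |v|^2 tr rho] for the unit product kets [v];
   hence [Var X <= 2^-N \sum_s |X s|^2].  This sum is the squared norm of [O]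
   under the analysis map of the product frame [\bigotimes_n A_(s n)], with
   [A_i = 3 |psi_i><psi_i| - I].  Such norms are multiplicative under tensor
   products, and for one qubit the Gram matrix of the [A_i] is [6 I - J], of
   norm [6].  So [Var X <= 2^-N 6^N tr (O^2) = 3^N tr (O^2)]. *)

Lemma eq_binary_digits N k l : (k < 2 ^ N)%N -> (l < 2 ^ N)%N ->
  (forall n, n < N -> k %/ 2 ^ n %% 2 = l %/ 2 ^ n %% 2)%N -> k = l.
Proof.
elim: N k l => [|N IH] k l; first by rewrite expn0 !ltnS !leqn0 => /eqP-> /eqP->.
move=> ltk ltl eq_digits.
have eq_half : (k %/ 2 = l %/ 2)%N.
  apply: IH; rewrite ?ltn_divLR -?expnSr // => n ltnN.
  by rewrite -!divnMA -expnS; apply: eq_digits.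
have := eq_digits 0%N isT; rewrite expn0 !divn1 => eq_odd.
by rewrite (divn_eq k 2) (divn_eq l 2) eq_half eq_odd.
Qed.

Lemma qbitE N (n : 'I_N) (k : 'I_(2 ^ N)) : qbit n k = (k %/ 2 ^ n %% 2)%N :> nat.
Proof. by rewrite /qbit inordK // ltn_mod. Qed.

Definition bits N (k : 'I_(2 ^ N)) : {ffun 'I_N -> 'I_2} := [ffun n => qbit n k].

Lemma bits_inj N : injective (@bits N).
Proof.
move=> k l /ffunP eq_bits; apply/val_inj/(@eq_binary_digits N); rewrite ?ltn_ord //.
move=> n ltnN; have := eq_bits (Ordinal ltnN); rewrite !ffunE => /(congr1 val) /=.
by rewrite !qbitE.
Qed.

Lemma bits_bij N : bijective (@bits N).
Proof. by apply: inj_card_bij; [exact: bits_inj | rewrite card_ffun !card_ord]. Qed.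

Definition bits2 N (kl : 'I_(2 ^ N) * 'I_(2 ^ N)) : {ffun 'I_N -> 'I_2 * 'I_2} :=
  [ffun n => (qbit n kl.1, qbit n kl.2)].

Lemma bits2_inj N : injective (@bits2 N).
Proof.
move=> [k l] [k' l'] /ffunP eq_bits.
have /bits_inj-> : bits k = bits k'.
  by apply/ffunP => n; have := eq_bits n; rewrite !ffunE => -[].
have /bits_inj-> // : bits l = bits l'.
by apply/ffunP => n; have := eq_bits n; rewrite !ffunE => -[].
Qed.

Lemma bits2_bij N : bijective (@bits2 N).
Proof.
apply: inj_card_bij; first exact: bits2_inj.
by rewrite card_ffun !card_prod !card_ord expnMn.
Qed.

Section BitSums.
Variables (R : comPzSemiRingType) (N : nat).

Lemma sum_bits (F : {ffun 'I_N -> 'I_2} -> R) :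
  \sum_(k < 2 ^ N) F (bits k) = \sum_f F f.
Proof. by rewrite (reindex _ (onW_bij _ (@bits_bij N))). Qed.

Lemma sum_bits2 (F : {ffun 'I_N -> 'I_2 * 'I_2} -> R) :
  \sum_f F f = \sum_(k < 2 ^ N) \sum_(l < 2 ^ N) F (bits2 (k, l)).
Proof. by rewrite (reindex _ (onW_bij _ (@bits2_bij N))) pair_bigA; apply: eq_bigr => -[]. Qed.

Lemma sum_prod_qbit (G : 'I_N -> 'I_2 -> R) :
  \sum_(k < 2 ^ N) \prod_(n < N) G n (qbit n k) = \prod_(n < N) \sum_(b < 2) G n b.
Proof.
rewrite bigA_distr_bigA -sum_bits; apply: eq_bigr => k _.
by apply: eq_bigr => n _; rewrite ffunE.
Qed.

Lemma prod_eq_qbit (k l : 'I_(2 ^ N)) :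
  \prod_(n < N) ((qbit n k == qbit n l)%:R : R) = (k == l)%:R.
Proof.
have [->|neq_kl] := eqVneq k l; first by rewrite big1 // => n _; rewrite eqxx.
have [n neq_n] : exists n, qbit n k != qbit n l.
  apply/existsP; apply: contraR neq_kl => /existsPn same; apply/eqP/bits_inj.
  by apply/ffunP => n; rewrite !ffunE; apply/eqP; rewrite -[_ == _]negbK same.
by rewrite (bigD1 n) //= (negbTE neq_n) mul0r.
Qed.

End BitSums.

Definition fcons (T : finType) N (t : T) (f : {ffun 'I_N -> T}) : {ffun 'I_N.+1 -> T} :=
  [ffun i => if unlift ord0 i is Some j then f j else t].

Lemma fcons_bij (T : finType) N :
  bijective (fun tf : T * {ffun 'I_N -> T} => fcons tf.1 tf.2).
Proof.
exists (fun f : {ffun 'I_N.+1 -> T} => (f ord0, [ffun j => f (lift ord0 j)])).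
  move=> [t f] /=; rewrite /fcons ffunE unlift_none; congr pair.
  by apply/ffunP => j; rewrite !ffunE liftK.
move=> f; apply/ffunP => i; rewrite /fcons !ffunE.
by case: unliftP => [j ->|->] //; rewrite ffunE.
Qed.

Lemma sum_ffunS (R : nmodType) (T : finType) N (F : {ffun 'I_N.+1 -> T} -> R) :
  \sum_f F f = \sum_(t : T) \sum_(f : {ffun 'I_N -> T}) F (fcons t f).
Proof. by rewrite pair_big /= (reindex _ (onW_bij _ (@fcons_bij T N))). Qed.

Lemma sum_ffun0 (R : nmodType) (T : finType) (F : {ffun 'I_0 -> T} -> R) :
  \sum_f F f = F (ffun0 (card_ord 0)).
Proof. by rewrite (big_pred1 (ffun0 (card_ord 0))) // => f /=; apply/esym/eqP/ffunP => -[]. Qed.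

Lemma prod_fcons (R : comPzSemiRingType) (I T : finType) N (a : I -> T -> R)
    i (s : {ffun 'I_N -> I}) t (f : {ffun 'I_N -> T}) :
  \prod_(n < N.+1) a (fcons i s n) (fcons t f n) = a i t * \prod_(n < N) a (s n) (f n).
Proof.
rewrite big_ord_recl /fcons !ffunE unlift_none; congr (_ * _).
by apply: eq_bigr => n _; rewrite !ffunE liftK.
Qed.

Section OperatorBounds.
Variable C : numClosedFieldType.

Definition normsq (x : C) := x * x^*.

Lemma normsq_ge0 x : 0 <= normsq x.
Proof. exact: mul_conjC_ge0. Qed.

Lemma conj_normsq x : (normsq x)^* = normsq x.
Proof. by rewrite /normsq rmorphM /= conjCK mulrC. Qed.

Variables (I T : finType) (a : I -> T -> C) (lam : C).

(* The norm of a matrix equals that of its adjoint: expand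
   [0 <= |lam g - a^* a g|^2] and use the bound on the adjoint for [a g]. *)
Lemma op_bound_from_adjoint : 0 < lam ->
  (forall c : I -> C, \sum_t normsq (\sum_i (a i t)^* * c i) <= lam * \sum_i normsq (c i)) ->
  forall g : T -> C, \sum_i normsq (\sum_t a i t * g t) <= lam * \sum_t normsq (g t).
Proof.
move=> lam_gt0 adj_bound g.
set c := fun i => \sum_t a i t * g t.
set w := fun t => \sum_i (a i t)^* * c i.
set S := \sum_i normsq (c i); set G := \sum_t normsq (g t).
have lam_real : lam^* = lam by apply/CrealP/gtr0_real.
have pair_gw : \sum_t g t * (w t)^* = S.
  under eq_bigr do rewrite /w rmorph_sum big_distrr.
  rewrite exchange_big; apply: eq_bigr => i _ /=.
  rewrite /normsq /c big_distrl; apply: eq_bigr => t _.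
  by rewrite rmorphM /= conjCK mulrCA mulrA.
have pair_wg : \sum_t (g t)^* * w t = S.
  have S_real : S^* = S by rewrite rmorph_sum; apply: eq_bigr => i _; apply: conj_normsq.
  rewrite -S_real -pair_gw rmorph_sum; apply: eq_bigr => t _.
  by rewrite rmorphM /= conjCK mulrC.
have expand : \sum_t normsq (lam * g t - w t)
    = lam * lam * G - lam * S - lam * S + \sum_t normsq (w t).
  rewrite -{1}pair_gw -pair_wg /G !big_distrr /= -!sumrB -big_split.
  by apply: eq_bigr => t _; rewrite /normsq rmorphB rmorphM /= lam_real; ring.
have : 0 <= \sum_t normsq (lam * g t - w t) by apply: sumr_ge0 => t _; apply: normsq_ge0.
rewrite expand => ge0.
have : lam * S <= lam * (lam * G).
  rewrite -subr_ge0; apply: le_trans ge0 _; rewrite -subr_ge0.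
  have -> : lam * (lam * G) - lam * S - (lam * lam * G - lam * S - lam * S
      + \sum_t normsq (w t)) = lam * S - \sum_t normsq (w t) by ring.
  by rewrite subr_ge0; apply: adj_bound.
by rewrite ler_pM2l.
Qed.

Lemma tensor_op_bound : 0 <= lam ->
  (forall g : T -> C, \sum_i normsq (\sum_t a i t * g t) <= lam * \sum_t normsq (g t)) ->
  forall N (g : {ffun 'I_N -> T} -> C),
  \sum_(s : {ffun 'I_N -> I}) normsq (\sum_f g f * \prod_(n < N) a (s n) (f n))
    <= lam ^+ N * \sum_f normsq (g f).
Proof.
move=> lam_ge0 bound; elim=> [|N IH] g.
  by rewrite !sum_ffun0 big_ord0 mulr1 expr0 mul1r.
pose h (s : {ffun 'I_N -> I}) t :=
  \sum_f g (fcons t f) * \prod_(n < N) a (s n) (f n).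
have split_first i s : \sum_f g f * \prod_(n < N.+1) a (fcons i s n) (f n)
    = \sum_t a i t * h s t.
  rewrite sum_ffunS; apply: eq_bigr => t _.
  by rewrite /h big_distrr; apply: eq_bigr => f _; rewrite prod_fcons mulrCA.
rewrite sum_ffunS; under eq_bigr do under eq_bigr do rewrite split_first.
rewrite exchange_big /=.
apply: le_trans (_ : _ <= \sum_s lam * \sum_t normsq (h s t)) _.
  by apply: ler_sum => s _; apply: bound.
rewrite -big_distrr /= exchange_big /= exprS -mulrA ler_wpM2l //.
rewrite sum_ffunS big_distrr /=; apply: ler_sum => t _.
exact: (IH (fun f => g (fcons t f))).
Qed.

End OperatorBounds.

Lemma sum_ord2 (R : nmodType) (F : 'I_2 -> R) : \sum_(p < 2) F p = F 0 + F 1.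
Proof. by rewrite big_ord_recr big_ord1; congr (F _ + F _); apply: val_inj. Qed.

Lemma sum_ord4 (R : nmodType) (F : 'I_4 -> R) : \sum_(i < 4) F i = F 0 + F 1 + F 2%:R + F 3%:R.
Proof.
by rewrite !big_ord_recl big_ord0 addr0 !addrA; congr (F _ + F _ + F _ + F _); apply: val_inj.
Qed.

Lemma sum_mul_eq (R : pzSemiRingType) (I : finType) (j : I) (F : I -> R) :
  \sum_k F k * (k == j)%:R = F j.
Proof.
rewrite (bigD1 j) //= eqxx mulr1 big1 ?addr0 // => k neq_kj.
by rewrite (negbTE neq_kj) mulr0.
Qed.

Lemma mxtrace_mulmxE (R : pzSemiRingType) n (A B : 'M[R]_n) :
  \tr (A *m B) = \sum_k \sum_l A k l * B l k.
Proof. by apply: eq_bigr => k _; rewrite mxE. Qed.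

Section PositiveSemidefinite.
Variables (C : numClosedFieldType) (n : nat).

Lemma quad_formE (A : 'M[C]_n) (v : 'cV[C]_n) :
  (adjmx v *m A *m v) 0 0 = \sum_a \sum_b (v a 0)^* * A a b * v b 0.
Proof.
rewrite mxE; under eq_bigr do rewrite mxE big_distrl /=.
by rewrite exchange_big; apply: eq_bigr => a _; apply: eq_bigr => b _; rewrite !mxE.
Qed.

Lemma quad_form_two_basis (A : 'M[C]_n) (x y : C) k l :
  let v := \col_m (x * (m == k)%:R - y * (m == l)%:R) in
  (adjmx v *m A *m v) 0 0
    = x^* * x * A k k - x^* * y * A k l - y^* * x * A l k + y^* * y * A l l.
Proof.
move=> v; rewrite quad_formE.
have row a : \sum_b (v a 0)^* * A a b * v b 0 =
    x^* * ((x * A a k - y * A a l) * (a == k)%:R)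
    - y^* * ((x * A a k - y * A a l) * (a == l)%:R).
  rewrite (eq_bigr (fun b => (x^* * (a == k)%:R - y^* * (a == l)%:R) *
     (x * (A a b * (b == k)%:R) - y * (A a b * (b == l)%:R)))); last first.
    by move=> b _; rewrite !mxE rmorphB !rmorphM /= !conjC_nat; ring.
  by rewrite -big_distrr /= sumrB -!big_distrr /= !sum_mul_eq; ring.
by under eq_bigr do rewrite row; rewrite sumrB -!big_distrr /= !sum_mul_eq; ring.
Qed.

(* Sum the 2x2 minors' nonnegativity: testing [rho] against the vectors
   [v_l^* e_k - v_k^* e_l] for all [k, l] adds up to [2 (|v|^2 tr rho - <v|rho|v>)]. *)
Lemma psd_quad_form_le_trace (rho : 'M[C]_n) (v : 'cV[C]_n) : psd rho ->
  (adjmx v *m rho *m v) 0 0 <= (\sum_a (v a 0)^* * v a 0) * \tr rho.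
Proof.
case=> _ rho_psd.
set Q := (adjmx v *m rho *m v) 0 0; set S := \sum_a (v a 0)^* * v a 0.
pose w k l := \col_m ((v l 0)^* * (m == k)%:R - (v k 0)^* * (m == l)%:R).
have : 0 <= \sum_k \sum_l (adjmx (w k l) *m rho *m w k l) 0 0.
  by apply: sumr_ge0 => k _; apply: sumr_ge0 => l _; apply: rho_psd.
under eq_bigr do under eq_bigr do rewrite quad_form_two_basis !conjCK.
under eq_bigr do rewrite big_split !sumrB /=.
have diag_kk : \sum_k \sum_l v l 0 * (v l 0)^* * rho k k = S * \tr rho.
  rewrite /S /mxtrace big_distrr /=; apply: eq_bigr => k _.
  by rewrite big_distrl /=; apply: eq_bigr => l _; ring.
have diag_ll : \sum_k \sum_l v k 0 * (v k 0)^* * rho l l = S * \tr rho.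
  rewrite /S /mxtrace big_distrl /=; apply: eq_bigr => k _.
  by rewrite big_distrr /=; apply: eq_bigr => l _; ring.
have off_kl : \sum_k \sum_l v l 0 * (v k 0)^* * rho k l = Q.
  by rewrite /Q quad_formE; apply: eq_bigr => k _; apply: eq_bigr => l _; ring.
have off_lk : \sum_k \sum_l v k 0 * (v l 0)^* * rho l k = Q.
  by rewrite /Q quad_formE exchange_big; apply: eq_bigr => k _; apply: eq_bigr => l _; ring.
rewrite big_split !sumrB /= diag_kk off_kl off_lk diag_ll.
have -> : S * \tr rho - Q - Q + S * \tr rho = (S * \tr rho - Q) *+ 2 by ring.
by rewrite pmulrn_lge0 // subr_ge0.
Qed.

End PositiveSemidefinite.

Lemma variance_le_second_moment (C : numClosedFieldType) N
    (p : outcome N -> C) (X : outcome N -> C) :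
  (forall s, 0 <= p s) -> \sum_s p s = 1 -> (forall s, X s \is Num.real) ->
  variance p X <= expectation p (fun s => X s ^+ 2).
Proof.
move=> p_ge0 p_sum1 X_real; rewrite /variance /expectation.
set mu := \sum_s p s * X s.
have mu_real : mu \is Num.real.
  by apply: rpred_sum => s _; apply: rpredM; [apply: ger0_real | ].
have -> : \sum_s p s * (X s - mu) ^+ 2 = \sum_s p s * X s ^+ 2 - mu ^+ 2.
  rewrite (eq_bigr (fun s => p s * X s ^+ 2 - 2%:R * mu * (p s * X s) + mu ^+ 2 * p s));
    last by move=> s _; ring.
  by rewrite big_split sumrB /= -!big_distrr /= p_sum1 -/mu; ring.
by rewrite gerBl real_exprn_even_ge0.
Qed.

Lemma expectation_le_bound (C : numClosedFieldType) N (p Y : outcome N -> C) c :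
  (forall s, p s <= c) -> (forall s, 0 <= Y s) -> expectation p Y <= c * \sum_s Y s.
Proof.
move=> p_le Y_ge0; rewrite /expectation big_distrr /=.
by apply: ler_sum => s _; apply: ler_wpM2r.
Qed.

Section SingleQubit.
Variables (C : numClosedFieldType) (psi : 'I_4 -> 'cV[C]_2).

Lemma braketE n (u v : 'cV[C]_n) : braket u v = \sum_(p < n) (u p 0)^* * v p 0.
Proof. by rewrite /braket mxE; apply: eq_bigr => p _; rewrite !mxE. Qed.

Definition sic_factor i (p q : 'I_2) : C := 3%:R * psi i p 0 * (psi i q 0)^* - (p == q)%:R.

Lemma sic_factorE i p q :
  (3%:R *: (psi i *m adjmx (psi i)) - 1%:M) p q = sic_factor i p q.
Proof. by rewrite !mxE big_ord1 !mxE mulrA. Qed.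

Lemma conj_sic_factor i p q : (sic_factor i p q)^* = sic_factor i q p.
Proof. by rewrite /sic_factor rmorphB !rmorphM /= conjCK !conjC_nat eq_sym mulrAC. Qed.

Hypothesis sic : qubit_SIC psi.

Lemma normsq_braket i j : normsq (braket (psi i) (psi j)) = if i == j then 1 else 3%:R^-1.
Proof.
case: sic => unit overlap; have [<-|neq_ij] := eqVneq i j.
  by rewrite /normsq unit rmorph1 mulr1.
by rewrite /normsq -normCK overlap.
Qed.

Lemma sic_factor_gram i k :
  \sum_(p < 2) \sum_(q < 2) sic_factor i p q * (sic_factor k p q)^* = 6%:R * (i == k)%:R - 1.
Proof.
have expand : \sum_(p < 2) \sum_(q < 2) sic_factor i p q * (sic_factor k p q)^* =
    9%:R * normsq (braket (psi k) (psi i))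
    - 3%:R * braket (psi i) (psi i) - 3%:R * braket (psi k) (psi k) + 2%:R.
  under eq_bigr do under eq_bigr do rewrite conj_sic_factor.
  rewrite /normsq !braketE !sum_ord2 !rmorphD !rmorphM /= !conjCK /sic_factor /=; ring.
case: (sic) => unit _; rewrite expand normsq_braket !unit.
by have [_|_] := eqVneq i k; rewrite /=; [ring | field].
Qed.

(* A SIC is a tight frame: [\sum_i |psi_i><psi_i| = 2 I].  The Frobenius norm of
   the difference expands into overlaps of the [psi_i], which sum to zero. *)
Lemma sic_frame p q : \sum_(i < 4) psi i p 0 * (psi i q 0)^* = 2%:R * (p == q)%:R.
Proof.
pose D p q := \sum_(i < 4) psi i p 0 * (psi i q 0)^* - 2%:R * (p == q)%:R.
have expand : \sum_(p < 2) \sum_(q < 2) D p q * (D p q)^* =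
    \sum_(i < 4) \sum_(j < 4) normsq (braket (psi i) (psi j))
    - 4%:R * \sum_(i < 4) braket (psi i) (psi i) + 8%:R.
  rewrite /normsq /D !sum_ord2 !sum_ord4 !braketE !sum_ord2.
  by rewrite ?rmorphD ?rmorphN ?rmorphM /= ?conjCK ?conjC_nat /=; ring.
have sum_unit : \sum_(i < 4) braket (psi i) (psi i) = 4%:R.
  by case: sic => unit _; rewrite (eq_bigr (fun _ => 1)) ?sumr_const ?card_ord.
have sum_overlap : \sum_(i < 4) \sum_(j < 4) normsq (braket (psi i) (psi j)) = 8%:R.
  under eq_bigr => i _.
    rewrite (bigD1 i) //= normsq_braket eqxx (eq_bigr (fun _ => 3%:R^-1)); last first.
      by move=> j neq_ji; rewrite normsq_braket eq_sym (negbTE neq_ji).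
    rewrite sumr_const cardC1 card_ord.
  over.
  by rewrite sumr_const card_ord /=; field.
have frob0 : \sum_(p < 2) \sum_(q < 2) D p q * (D p q)^* = 0.
  by rewrite expand sum_unit sum_overlap; ring.
have row_ge0 p' : true -> 0 <= \sum_(q < 2) D p' q * (D p' q)^*.
  by move=> _; apply: sumr_ge0 => q' _; apply: mul_conjC_ge0.
have := psumr_eq0P row_ge0 frob0 (i := p) isT.
move/(psumr_eq0P (fun q' _ => mul_conjC_ge0 (D p q')))/(_ q isT)/eqP.
by rewrite mul_conjC_eq0 subr_eq0 => /eqP.
Qed.

(* The Gram matrix [6 I - J] of the four factors has largest eigenvalue 6. *)
Lemma sic_factor_op_bound (g : 'I_2 * 'I_2 -> C) :
  \sum_i normsq (\sum_t sic_factor i t.2 t.1 * g t) <= 6%:R * \sum_t normsq (g t).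
Proof.
apply: op_bound_from_adjoint; first by rewrite ltr0n.
move=> c; under eq_bigr do under eq_bigr do rewrite conj_sic_factor.
have expand t : normsq (\sum_i sic_factor i t.1 t.2 * c i) =
    \sum_i \sum_k c i * (c k)^* * (sic_factor i t.1 t.2 * (sic_factor k t.1 t.2)^*).
  rewrite /normsq rmorph_sum big_distrlr; apply: eq_bigr => i _.
  by apply: eq_bigr => k _; rewrite rmorphM /=; ring.
under eq_bigr do rewrite expand.
rewrite exchange_big; under eq_bigr do rewrite exchange_big.
have gram i k : \sum_(t : 'I_2 * 'I_2) sic_factor i t.1 t.2 * (sic_factor k t.1 t.2)^*
    = 6%:R * (i == k)%:R - 1 by rewrite -sic_factor_gram pair_bigA.
under eq_bigr do under eq_bigr do rewrite -big_distrr gram.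
have gram_sum i : \sum_k c i * (c k)^* * (6%:R * (i == k)%:R - 1)
    = 6%:R * normsq (c i) - c i * \sum_k (c k)^*.
  under eq_bigr do rewrite eq_sym mulrBr mulr1 mulrCA mulrA.
  by rewrite sumrB sum_mul_eq big_distrr.
under eq_bigr do rewrite gram_sum.
rewrite sumrB -big_distrr /= -big_distrl /= -rmorph_sum gerBl.
exact: normsq_ge0.
Qed.

End SingleQubit.

Section SICShadow.
Variables (C : numClosedFieldType) (psi : 'I_4 -> 'cV[C]_2) (N : nat).
Hypothesis sic : qubit_SIC psi.

Let ket (s : outcome N) := kron_ket (fun n => psi (s n)).

Lemma sic_shadowE (s : outcome N) (k l : 'I_(2 ^ N)) :
  sic_shadow psi s k l = \prod_n sic_factor psi (s n) (qbit n k) (qbit n l).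
Proof. by rewrite mxE; apply: eq_bigr => n _; rewrite sic_factorE. Qed.

Lemma kron_ket_normsq s : \sum_a (ket s a 0)^* * ket s a 0 = 1.
Proof.
under eq_bigr do rewrite mxE rmorph_prod -big_split /=.
rewrite (sum_prod_qbit (fun n b => (psi (s n) b 0)^* * psi (s n) b 0)).
by apply: big1 => n _; rewrite -braketE; case: sic.
Qed.

Lemma sum_sic_quad_form (rho : 'M[C]_(2 ^ N)) :
  \sum_s (adjmx (ket s) *m rho *m ket s) 0 0 = 2%:R ^+ N * \tr rho.
Proof.
under eq_bigr do rewrite quad_formE.
rewrite exchange_big; under eq_bigr do rewrite exchange_big.
rewrite /mxtrace big_distrr /=; apply: eq_bigr => a _.
have entry b : \sum_s (ket s a 0)^* * rho a b * ket s b 0 = 2%:R ^+ N * rho a b * (b == a)%:R.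
  under eq_bigr do rewrite !mxE rmorph_prod /= mulrAC -big_split /= mulrC.
  rewrite -big_distrr /=.
  rewrite -(bigA_distr_bigA (fun n i => (psi i (qbit n a) 0)^* * psi i (qbit n b) 0)) /=.
  under eq_bigr do (under eq_bigr do rewrite mulrC; rewrite sic_frame //).
  by rewrite big_split /= prodr_const card_ord prod_eq_qbit eq_sym; ring.
by under eq_bigr do rewrite entry; rewrite sum_mul_eq.
Qed.

Variable rho : 'M[C]_(2 ^ N).
Hypothesis rho_density : density_matrix rho.

Lemma sic_prob_ge0 s : 0 <= sic_prob psi rho s.
Proof.
case: rho_density => -[_ rho_psd] _.
by apply: mulr_ge0; [rewrite invr_ge0 exprn_ge0 ?ler0n | apply: rho_psd].
Qed.

Lemma sic_prob_le s : sic_prob psi rho s <= (2%:R ^+ N)^-1.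
Proof.
case: rho_density => rho_psd tr_rho1.
rewrite -[leRHS]mulr1 ler_wpM2l ?invr_ge0 ?exprn_ge0 ?ler0n //.
by have := psd_quad_form_le_trace (ket s) rho_psd; rewrite kron_ket_normsq tr_rho1 mulr1.
Qed.

Lemma sum_sic_prob : \sum_s sic_prob psi rho s = 1.
Proof.
case: rho_density => _ tr_rho1.
by rewrite -big_distrr /= sum_sic_quad_form tr_rho1 mulr1 mulVf // expf_neq0 // pnatr_eq0.
Qed.

Variable O : 'M[C]_(2 ^ N).
Hypothesis O_hermitian : is_hermitian_mx O.

Lemma hermitian_conj_entry k l : (O k l)^* = O l k.
Proof. by have := congr1 (fun M : 'M[C]_(2 ^ N) => M l k) O_hermitian; rewrite !mxE. Qed.

Lemma shadow_trace_real s : \tr (O *m sic_shadow psi s) \is Num.real.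
Proof.
apply/CrealP; rewrite !mxtrace_mulmxE rmorph_sum /= exchange_big.
apply: eq_bigr => l _; rewrite rmorph_sum; apply: eq_bigr => k _.
rewrite rmorphM /= hermitian_conj_entry !sic_shadowE rmorph_prod /=; congr (_ * _).
by apply: eq_bigr => n _; rewrite conj_sic_factor.
Qed.

(* [tr (O sigma_s)] is the coefficient of [O] on the product frame
   [\bigotimes_n A_(s n)]; tensorize the single-qubit bound. *)
Lemma sum_normsq_shadow_trace_le :
  \sum_s normsq (\tr (O *m sic_shadow psi s)) <= 6%:R ^+ N * \tr (O *m O).
Proof.
have [g bitsK _] := bits2_bij N.
pose Of (f : {ffun 'I_N -> 'I_2 * 'I_2}) := O (g f).1 (g f).2.
have shadow_trace s : \tr (O *m sic_shadow psi s) =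
    \sum_f Of f * \prod_(n < N) sic_factor psi (s n) (f n).2 (f n).1.
  rewrite sum_bits2 mxtrace_mulmxE; apply: eq_bigr => k _; apply: eq_bigr => l _.
  rewrite /Of bitsK sic_shadowE; congr (_ * _).
  by apply: eq_bigr => n _; rewrite ffunE.
have trace_sq : \tr (O *m O) = \sum_f normsq (Of f).
  rewrite sum_bits2 mxtrace_mulmxE; apply: eq_bigr => k _; apply: eq_bigr => l _.
  by rewrite /Of /normsq bitsK /= hermitian_conj_entry.
under eq_bigr do rewrite shadow_trace.
rewrite trace_sq.
apply: (tensor_op_bound (a := fun i (t : 'I_2 * 'I_2) => sic_factor psi i t.2 t.1)).
  by rewrite ler0n.
exact: sic_factor_op_bound.
Qed.

End SICShadow.

Theorem mainTheorem1 (R : rcfType) (psi : 'I_4 -> 'cV[R[i]]_2) (N : nat)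
  (rho O : 'M[R[i]]_(2 ^ N)) :
  qubit_SIC psi -> (0 < N)%N -> density_matrix rho -> is_hermitian_mx O ->
  variance (sic_prob psi rho) (fun s => \tr (O *m sic_shadow psi s))
    <= 3%:R ^+ N * \tr (O *m O).
Proof.
(* The bound also holds for [N = 0]. *)
move=> sic _ rho_density O_hermitian.
set X := fun s => \tr (O *m sic_shadow psi s).
have X_real s : X s \is Num.real by apply: shadow_trace_real.
have var_le := variance_le_second_moment (sic_prob_ge0 psi rho_density)
  (sum_sic_prob sic rho_density) X_real.
apply: le_trans var_le _.
have X_sq s : X s ^+ 2 = normsq (X s) by rewrite /normsq conj_Creal // expr2.
apply: le_trans (_ : _ <= (2%:R ^+ N)^-1 * (6%:R ^+ N * \tr (O *m O))) _.
  apply: le_trans (expectation_le_bound (sic_prob_le sic rho_density) _) _.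
    by move=> s; rewrite X_sq normsq_ge0.
  under eq_bigr do rewrite X_sq.
  rewrite ler_wpM2l ?invr_ge0 ?exprn_ge0 ?ler0n //.
  exact: sum_normsq_shadow_trace_le.
have pow6 : 6%:R ^+ N = 2%:R ^+ N * 3%:R ^+ N :> R[i] by rewrite -exprMn -natrM.
by rewrite pow6 -mulrA mulKf // expf_neq0 // pnatr_eq0.
Qed.
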